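(* Let $\lambda$ and $g$ be as in the context. Let $b^{(1)}\in[0,c^{(1)}]$ be the point with $g(b^{(1)})=0$ and set $b^{(2)}=b^{(1)}/\lambda$. Then $g'(b^{(2)})=-1$.
   Context: There is a unique constant $\lambda=2.5029\ldots$ and a unique infinitely (period-doubling) renormalizable analytic unimodal map $g:[-1,1]\to[-1,1]$ solving $g(x)=-\lambda\, g^{2}(-x/\lambda)$ for $-1\le x\le1$ ($g^2=g\circ g$). Unimodal means: $-1$ is the unique fixed point with positive multiplier, $g(1)=-1$, and $g$ has a unique maximum at an interior nondegenerate critical point $c^{(0)}$. Moreover $g$ is analytic near $[-1,1]$, even, concave on $[-c^{(1)},c^{(1)}]$ where $c^{(1)}=g(c^{(0)})$, satisfies $g(c^{(1)})=-c^{(1)}/\lambda$, $g'(c^{(1)})=-\lambda$, and has negative Schwarzian derivative. *)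

From Stdlib Require Import Reals Lra.
From Coquelicot Require Import Coquelicot.
Open Scope R_scope.

Definition analytic_at (f : R -> R) (x : R) : Prop :=
  exists (a : nat -> R) (r : R), 0 < r /\
    forall y, Rabs (y - x) < r -> is_pseries a (y - x) (f y).

Definition analytic_near_I (f : R -> R) : Prop :=
  exists eps, 0 < eps /\ forall x, -1 - eps < x < 1 + eps -> analytic_at f x.

Definition in_I (x : R) : Prop := -1 <= x <= 1.

Definition unimodal (g : R -> R) (c0 : R) : Prop :=
  (forall x, in_I x -> in_I (g x)) /\
  (g (-1) = -1 /\ 0 < Derive g (-1) /\
     forall x, in_I x -> g x = x -> 0 < Derive g x -> x = -1) /\
  g 1 = -1 /\
  (-1 < c0 < 1 /\ Derive g c0 = 0 /\ Derive_n g 2 c0 <> 0 /\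
     forall x, in_I x -> x <> c0 -> g x < g c0).

Definition even_on_I (g : R -> R) : Prop := forall x, in_I x -> g (- x) = g x.

Definition concave_on (g : R -> R) (a b : R) : Prop :=
  forall x y t, a <= x <= b -> a <= y <= b -> 0 <= t <= 1 ->
    t * g x + (1 - t) * g y <= g (t * x + (1 - t) * y).

Definition schwarzian (g : R -> R) (x : R) : R :=
  Derive_n g 3 x / Derive g x - 3 / 2 * (Derive_n g 2 x / Derive g x) ^ 2.

Definition neg_schwarzian_on_I (g : R -> R) : Prop :=
  forall x, in_I x -> Derive g x <> 0 -> schwarzian g x < 0.

Definition feigenbaum_eq (lam : R) (g : R -> R) : Prop :=
  forall x, in_I x -> g x = - lam * g (g (- x / lam)).

(* The critical point of the even map g is 0, and c1 = g 0 is its maximum.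
   Evaluating the fixed-point equation at b1 gives g (g b2) = 0, and since g is
   strictly decreasing on [0, c1] (by concavity) this forces g b2 = b1.
   Differentiating g x = - lam g (g (x / lam)) at x = b1 then yields
   g'(b1) = - g'(b1) g'(b2), and concavity makes g'(b1) <= - c1 / b1 < 0,
   so g'(b2) = -1. *)
From Stdlib Require Import Reals Lra Psatz.
From Coquelicot Require Import Coquelicot.
Open Scope R_scope.

Lemma CV_radius_gt_0_of_is_pseries (a : nat -> R) (z l : R) :
  z <> 0 -> is_pseries a z l -> Rbar_lt 0 (CV_radius a).
Proof.
  intros Hz Hl.
  destruct (Rbar_lt_le_dec 0 (CV_radius a)) as [Hpos | Hle]; [exact Hpos |].
  exfalso.
  apply (CV_disk_outside a z).
  - apply (Rbar_le_lt_trans _ 0); [exact Hle |]. simpl. apply Rabs_pos_lt, Hz.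
  - apply ex_series_lim_0, ex_pseries_R. exists l. exact Hl.
Qed.

Lemma analytic_at_ex_derive (f : R -> R) (x : R) : analytic_at f x -> ex_derive f x.
Proof.
  intros [a [r [Hr Ha]]].
  assert (Hrad : Rbar_lt (Rabs 0) (CV_radius a)).
  { rewrite Rabs_R0. apply (CV_radius_gt_0_of_is_pseries a (r / 2) (f (x + r / 2))); [lra |].
    replace (r / 2) with (x + r / 2 - x) at 1 by ring.
    apply Ha. rewrite Rabs_pos_eq; lra. }
  exists (scal 1 (PSeries (PS_derive a) 0)).
  apply (is_derive_ext_loc (fun y => PSeries a (y - x))).
  - apply (locally_interval _ x (x - r) (x + r)); simpl; [lra | lra |].
    intros y Hyl Hyr. apply is_pseries_unique, Ha, Rabs_def1; lra.
  - apply (is_derive_comp (PSeries a) (fun y => y - x)).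
    + replace (x - x) with 0 by ring. now apply is_derive_PSeries.
    + auto_derive; auto.
Qed.

Section Concave.

Variables (f : R -> R) (a b : R).
Hypothesis f_concave : concave_on f a b.

Lemma concave_on_subinterval (a' b' : R) : a <= a' -> b' <= b -> concave_on f a' b'.
Proof. intros Ha Hb x y t Hx Hy Ht. apply f_concave; lra. Qed.

Lemma concave_on_slope_le (x y : R) :
  a <= y < x -> x <= b -> (f x - f y) / (x - y) <= (f x - f a) / (x - a).
Proof.
  intros Hy Hx.
  set (s := (f x - f a) / (x - a)).
  set (t := (x - y) / (x - a)).
  assert (Hfa : f a = f x - s * (x - a)) by (unfold s; field; lra).
  assert (Ht : 0 < t <= 1).
  { unfold t; split; [apply Rdiv_lt_0_compat; lra |].
    apply (Rdiv_le_1 (x - y) (x - a)); lra. }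
  assert (Hconc := f_concave a x t ltac:(lra) ltac:(lra) ltac:(lra)).
  replace (t * a + (1 - t) * x) with y in Hconc by (unfold t; field; lra).
  rewrite Hfa in Hconc.
  replace (t * (f x - s * (x - a)) + (1 - t) * f x) with (f x - s * (x - y)) in Hconc
    by (unfold t; field; lra).
  apply Rle_div_l; lra.
Qed.

Lemma concave_on_decreasing :
  (forall y, a < y <= b -> f y < f a) -> forall x y, a <= x < y -> y <= b -> f y < f x.
Proof.
  intros Hmax x y Hxy Hy.
  destruct (Req_dec x a) as [-> | Hxa]; [apply Hmax; lra |].
  assert (Hslope := concave_on_slope_le y x ltac:(lra) Hy).
  assert (Hneg : (f y - f a) / (y - a) < 0).
  { apply Rdiv_neg_pos; [apply Rlt_minus, Hmax | ]; lra. }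
  assert (Hq : f y - f x = (f y - f x) / (y - x) * (y - x)) by (field; lra).
  nra.
Qed.

Lemma is_derive_concave_le_slope (x l : R) :
  a < x <= b -> is_derive f x l -> l <= (f x - f a) / (x - a).
Proof.
  intros Hx Hl. apply is_derive_Reals in Hl.
  set (s := (f x - f a) / (x - a)).
  destruct (Rle_lt_dec l s) as [Hle | Hlt]; [exact Hle |]. exfalso.
  destruct (Hl (l - s) ltac:(lra)) as [d Hd].
  assert (Hm : 0 < Rmin (d / 2) (x - a)) by (apply Rmin_glb_lt; destruct d; simpl; lra).
  set (h := - Rmin (d / 2) (x - a)).
  assert (Hh : a <= x + h < x).
  { assert (Rmin (d / 2) (x - a) <= x - a) by apply Rmin_r. unfold h; lra. }
  assert (Hhd : Rabs h < d).
  { unfold h. rewrite Rabs_Ropp, Rabs_pos_eq by lra.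
    assert (Rmin (d / 2) (x - a) <= d / 2) by apply Rmin_l. destruct d; simpl in *; lra. }
  specialize (Hd h ltac:(lra) Hhd).
  assert (Hslope := concave_on_slope_le x (x + h) Hh ltac:(lra)).
  replace ((f x - f (x + h)) / (x - (x + h))) with ((f (x + h) - f x) / h)
    in Hslope by (field; lra).
  apply Rabs_def2 in Hd. fold s in Hslope. lra.
Qed.

End Concave.

Lemma unimodal_even_crit_0 (g : R -> R) (c0 : R) :
  unimodal g c0 -> even_on_I g -> c0 = 0.
Proof.
  intros [_ [_ [_ [Hc0 [_ [_ Hmax]]]]]] Hev.
  destruct (Req_dec c0 0) as [| Hne]; [assumption |]. exfalso.
  assert (Hlt := Hmax (- c0) ltac:(unfold in_I; lra) ltac:(lra)).
  rewrite Hev in Hlt by (unfold in_I; lra). lra.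
Qed.

Lemma feigenbaum_eq_even (lam : R) (g : R -> R) :
  1 <= lam -> feigenbaum_eq lam g -> even_on_I g ->
  forall x, in_I x -> g x = - lam * g (g (x / lam)).
Proof.
  intros Hlam Hfe Hev x Hx.
  assert (Hxl : in_I (x / lam)).
  { unfold in_I in *. split; [apply Rle_div_r | apply Rle_div_l]; nra. }
  rewrite Hfe by exact Hx.
  replace (- x / lam) with (- (x / lam)) by (field; lra).
  now rewrite Hev.
Qed.

Lemma is_derive_renormalization (lam : R) (g : R -> R) (x d1 d2 : R) :
  lam <> 0 ->
  locally x (fun y => - lam * g (g (y / lam)) = g y) ->
  is_derive g (x / lam) d1 -> is_derive g (g (x / lam)) d2 ->
  is_derive g x (- (d2 * d1)).
Proof.
  intros Hlam Hloc Hd1 Hd2.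
  apply (is_derive_ext_loc _ _ _ _ Hloc).
  replace (- (d2 * d1)) with (- lam * scal (scal (/ lam) d1) d2)
    by (unfold scal; simpl; unfold mult; simpl; field; exact Hlam).
  apply is_derive_scal.
  apply (is_derive_comp g (fun y => g (y / lam))); [exact Hd2 |].
  apply (is_derive_comp g (fun y => y / lam)); [exact Hd1 |].
  auto_derive; [exact I | field; exact Hlam].
Qed.

Section ZeroPreimage.

Variables (lam b1 : R) (g : R -> R).
Hypothesis lam_gt_1 : 1 < lam.
Hypothesis g_renormalization : forall x, in_I x -> g x = - lam * g (g (x / lam)).
Hypothesis b1_zero : g b1 = 0.
Hypothesis b1_range : 0 < b1 < 1.

Lemma renormalization_zero_preimage (c1 : R) :
  c1 <= 1 -> (forall x, in_I x -> g x <= c1) ->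
  (forall x y, 0 <= x < y -> y <= c1 -> g y < g x) -> b1 <= c1 ->
  g (b1 / lam) = b1.
Proof.
  intros Hc1 Hmax Hdecr Hb1c1.
  assert (Hb2 : 0 < b1 / lam < b1) by (split; [apply Rdiv_lt_0_compat | apply Rlt_div_l]; nra).
  assert (Hggb2 : g (g (b1 / lam)) = g b1).
  { assert (E := g_renormalization b1 ltac:(unfold in_I; lra)). rewrite b1_zero in E |- *. nra. }
  assert (0 < g (b1 / lam)) by (rewrite <- b1_zero; apply Hdecr; lra).
  assert (g (b1 / lam) <= c1) by (apply Hmax; unfold in_I; lra).
  destruct (Rtotal_order (g (b1 / lam)) b1) as [L | [E | L]]; [| exact E |].
  - assert (g b1 < g (g (b1 / lam))) by (apply Hdecr; lra). lra.
  - assert (g (g (b1 / lam)) < g b1) by (apply Hdecr; lra). lra.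
Qed.

Lemma renormalization_derive_zero_preimage (D1 : R) :
  g (b1 / lam) = b1 -> is_derive g b1 D1 -> D1 <> 0 -> ex_derive g (b1 / lam) ->
  Derive g (b1 / lam) = -1.
Proof.
  intros Hgb2 HD1 HD1ne [D2 HD2].
  assert (HD1' : is_derive g b1 (- (D1 * D2))).
  { apply (is_derive_renormalization lam); [lra | | exact HD2 | rewrite Hgb2; exact HD1].
    apply (locally_interval _ b1 (-1) 1); simpl; [lra | lra |].
    intros y Hy1 Hy2. symmetry. apply g_renormalization. unfold in_I; lra. }
  assert (HD1eq : D1 = - (D1 * D2)).
  { rewrite <- (is_derive_unique _ _ _ HD1'). exact (eq_sym (is_derive_unique _ _ _ HD1)). }
  rewrite (is_derive_unique _ _ _ HD2).
  apply (Rmult_eq_reg_l D1); [lra | exact HD1ne].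
Qed.

End ZeroPreimage.

Theorem mainTheorem5 (lam : R) (g : R -> R) (c0 b1 : R) :
  2.5029 <= lam < 2.503 ->
  feigenbaum_eq lam g ->
  unimodal g c0 ->
  analytic_near_I g ->
  even_on_I g ->
  concave_on g (- g c0) (g c0) ->
  g (g c0) = - g c0 / lam ->
  Derive g (g c0) = - lam ->
  neg_schwarzian_on_I g ->
  0 <= b1 <= g c0 -> g b1 = 0 ->
  Derive g (b1 / lam) = -1.
Proof.
  intros Hlam Hfe Huni [eps [Heps Han]] Hev Hconc Hgc1 Hdc1 _ Hb1 Hgb1.
  assert (Hc0 := unimodal_even_crit_0 g c0 Huni Hev). subst c0.
  destruct Huni as [Hmap [_ [_ [_ [Hdc0 [_ Hmax]]]]]].
  set (c1 := g 0) in *.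
  assert (Hc1 : 0 < c1 <= 1).
  { assert (Hc1I := Hmap 0 ltac:(unfold in_I; lra)). fold c1 in Hc1I. unfold in_I in Hc1I.
    destruct (Req_dec c1 0) as [E | E]; [rewrite E in Hdc1; lra | lra]. }
  assert (Hconc0 := concave_on_subinterval g _ _ Hconc 0 c1 ltac:(lra) ltac:(lra)).
  assert (Hb1pos : 0 < b1) by (destruct (Req_dec b1 0) as [-> |]; [fold c1 in Hgb1 |]; lra).
  assert (Hb1c1 : b1 < c1).
  { destruct (Req_dec b1 c1) as [E | E]; [| lra].
    rewrite E, Hgc1 in Hgb1. assert (0 < c1 / lam) by (apply Rdiv_lt_0_compat; lra). lra. }
  assert (Hren := feigenbaum_eq_even lam g ltac:(lra) Hfe Hev).
  assert (Hgb2 : g (b1 / lam) = b1).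
  { apply (renormalization_zero_preimage lam b1 g) with (c1 := c1); try lra; auto.
    - intros x Hx. destruct (Req_dec x 0) as [-> | Hx0]; [apply Rle_refl | now left; apply Hmax].
    - apply (concave_on_decreasing g 0 c1 Hconc0).
      intros y Hy. apply Hmax; [unfold in_I |]; lra. }
  destruct (analytic_at_ex_derive g b1 (Han b1 ltac:(lra))) as [D1 HD1].
  assert (HD1neg : D1 < 0).
  { assert (Hslope := is_derive_concave_le_slope g 0 c1 Hconc0 b1 D1 ltac:(lra) HD1).
    rewrite Hgb1, Rminus_0_r in Hslope. fold c1 in Hslope.
    assert (0 < c1 / b1) by (apply Rdiv_lt_0_compat; lra). lra. }
  apply (renormalization_derive_zero_preimage lam b1 g) with (D1 := D1); auto; try lra.
  apply analytic_at_ex_derive, Han.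
  assert (0 < b1 / lam < 1) by (split; [apply Rdiv_lt_0_compat | apply Rlt_div_l]; nra). lra.
Qed.
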